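(* For each pair of integers $s,b\ge1$, the $(s,b)$-Generacci sequence exists and is unique. Moreover, every positive integer has exactly one $(s,b)$-Generacci legal decomposition using terms of the $(s,b)$-Generacci sequence.
   Context: Fix integers $s,b\ge1$. For an increasing sequence of positive integers $(a_i)_{i\ge1}$, the bins are $\mathcal B_n=\{a_{b(n-1)+1},\dots,a_{bn}\}$ for $n\ge1$, and $\mathcal B_n=\emptyset$ for $n\le 0$. An $(s,b)$-Generacci legal decomposition of a positive integer $m$ using this sequence is an expression $m=a_{\ell_1}+\cdots+a_{\ell_k}$ with $a_{\ell_1}>a_{\ell_2}>\cdots>a_{\ell_k}$ such that for all $i$ and all $j$, $\{a_{\ell_i},a_{\ell_{i+1}}\}\not\subset \mathcal B_{j-s}\cup\mathcal B_{j-s+1}\cup\cdots\cup\mathcal B_j$ (so no two summands lie in the same bin, and the bins containing any two summands have at least $s$ bins strictly between them). The $(s,b)$-Generacci sequence is the increasing sequence of positive integers $(a_i)_{i\ge1}$ in which each $a_i$ is the smallest positive integer that has no $(s,b)$-Generacci legal decomposition using only elements of $\{a_1,\dots,a_{i-1}\}$. *)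

(* Sequences a : nat -> nat are 1-indexed:
   the terms are a 1, a 2, ...; the value a 0 is irrelevant. *)
From mathcomp Require Import all_boot.
Set Implicit Arguments. Unset Strict Implicit. Unset Printing Implicit Defensive.

Definition inBin (b : nat) (a : nat -> nat) (n x : nat) : Prop :=
  exists k, b * (n - 1) < k <= b * n /\ a k = x.

(* x lies in B_(j-s) u ... u B_j ; bins with index <= 0 are empty, so
   only n >= 1 contributes, and windows with j <= 0 are empty. *)
Definition inWindow (s b : nat) (a : nat -> nat) (j x : nat) : Prop :=
  exists n, 1 <= n /\ j - s <= n <= j /\ inBin b a n x.

Definition legalPair (s b : nat) (a : nat -> nat) (x y : nat) : Prop :=
  forall j, ~ (inWindow s b a j x /\ inWindow s b a j y).

Fixpoint legalChain (s b : nat) (a : nat -> nat) (l : seq nat) : Prop :=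
  match l with
  | x :: ((y :: _) as t) => legalPair s b a x y /\ legalChain s b a t
  | _ => True
  end.

Definition legalDec (s b : nat) (a : nat -> nat) (P : nat -> Prop)
  (m : nat) (l : seq nat) : Prop :=
  sorted (fun x y => y < x) l /\ (forall x, x \in l -> P x) /\
  sumn l = m /\ legalChain s b a l.

Definition termBefore (a : nat -> nat) (i x : nat) : Prop :=
  exists k, 1 <= k < i /\ a k = x.

Definition isTerm (a : nat -> nat) (x : nat) : Prop :=
  exists k, 1 <= k /\ a k = x.

Definition hasLegalDecBefore (s b : nat) (a : nat -> nat) (i m : nat) : Prop :=
  exists l, legalDec s b a (termBefore a i) m l.

Definition isGeneracci (s b : nat) (a : nat -> nat) : Prop :=
  (forall i, 1 <= i -> 0 < a i) /\
  (forall i, 1 <= i -> a i < a i.+1) /\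
  (forall i, 1 <= i ->
     ~ hasLegalDecBefore s b a i (a i) /\
     (forall m, 0 < m < a i -> hasLegalDecBefore s b a i m)).

(** Index i of the sequence lies in bin [binOf i], and an index k' of a
    strictly smaller summand may follow a_k in a legal decomposition exactly
    when k' <= [lastFar k], the last index more than s bins below k.  For the
    Generacci sequence this forces a_(k+1) = a_k + a_(lastFar k + 1): the
    right-hand side is the least number not decomposable with a_1, ..., a_k.
    The same recurrence bounds every legal decomposition headed by a_k
    strictly below a_(k+1), so the greedy choice of the head is forced, which
    gives uniqueness of decompositions; and two Generacci sequences agree by
    induction, since the decompositions available before index i only depend
    on the first i - 1 terms. *)
From mathcomp Require Import all_boot zify.
Set Implicit Arguments. Unset Strict Implicit.

Lemma sub_legalDec s b a (P Q : nat -> Prop) m l :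
  (forall x, P x -> Q x) -> legalDec s b a P m l -> legalDec s b a Q m l.
Proof. by move=> PQ [sorted_l [inP rest]]; split=> //; split=> // x /inP/PQ. Qed.

Lemma termBefore_widen a i j x : i <= j -> termBefore a i x -> termBefore a j x.
Proof. by move=> le_ij [k [k_lt <-]]; exists k; split=> //; lia. Qed.

Lemma termBefore_isTerm a i x : termBefore a i x -> isTerm a x.
Proof. by move=> [k [/andP[k_gt0 _] <-]]; exists k. Qed.

Lemma legalDec_behead s b a P m x t :
  legalDec s b a P m (x :: t) -> legalDec s b a P (m - x) t.
Proof.
move=> [sorted_xt [inP [<- chain]]]; split; first exact: path_sorted sorted_xt.
split; first by move=> y t_y; apply: inP; rewrite inE t_y orbT.
by split; [rewrite /= addKn | case: (t) chain => [|? ?] //= []].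
Qed.

Section MonotoneSequence.

Variable a : nat -> nat.
Hypothesis a_incr : forall i, 0 < i -> a i < a i.+1.

Lemma incr_term i j : 0 < i -> i < j -> a i < a j.
Proof.
move=> i_gt0; elim: j => // j IHj; rewrite ltnS leq_eqVlt => /orP[/eqP<-|lt_ij].
  exact: a_incr.
exact: ltn_trans (IHj lt_ij) (a_incr (ltn_trans i_gt0 lt_ij)).
Qed.

Lemma ltn_term i j : 0 < i -> 0 < j -> (a i < a j) = (i < j).
Proof.
move=> i_gt0 j_gt0; apply/idP/idP; last exact: incr_term.
case: (ltngtP i j) => // [lt_ji | ->]; last by rewrite ltnn.
by have := incr_term j_gt0 lt_ji; lia.
Qed.

Lemma leq_term i j : 0 < i -> 0 < j -> (a i <= a j) = (i <= j).
Proof. by move=> i_gt0 j_gt0; rewrite leqNgt ltn_term // -leqNgt. Qed.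

Lemma term_inj i j : 0 < i -> 0 < j -> a i = a j -> i = j.
Proof.
move=> i_gt0 j_gt0 eq_a; apply/eqP.
by rewrite eqn_leq -(leq_term i_gt0 j_gt0) -(leq_term j_gt0 i_gt0) eq_a leqnn.
Qed.

Hypothesis a_gt0 : forall i, 0 < i -> 0 < a i.

Lemma index_leq_term i : 0 < i -> i <= a i.
Proof.
elim: i => // -[|i] IHi _; first exact: a_gt0.
exact: leq_ltn_trans (IHi (ltn0Sn i)) (a_incr (ltn0Sn i)).
Qed.

End MonotoneSequence.

Section Bins.

Variables (s b : nat).
Hypothesis b_gt0 : 0 < b.

Definition binOf (k : nat) : nat := (k.-1 %/ b).+1.

Definition lastFar (k : nat) : nat := b * (binOf k - s - 1).

Lemma binOfP k : 0 < k -> b * (binOf k - 1) < k <= b * binOf k.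
Proof.
move=> k_gt0; rewrite /binOf subn1 /=.
have := divn_eq k.-1 b; have := ltn_pmod k.-1 b_gt0.
set q := _ %/ _; set r := _ %% _; nia.
Qed.

Lemma binOf_eq k n : b * (n - 1) < k <= b * n -> binOf k = n.
Proof.
move=> /andP[lo hi]; have k_gt0 : 0 < k by lia.
by have /andP[] := binOfP k_gt0; set c := binOf k; nia.
Qed.

Lemma leq_binOf k k' : k' <= k -> binOf k' <= binOf k.
Proof. by move=> le_k'k; rewrite ltnS leq_div2r // -!subn1 leq_sub2r. Qed.

Lemma lastFar_lt k : 0 < k -> lastFar k < k.
Proof.
move=> k_gt0; have /andP[lt_k _] := binOfP k_gt0.
apply: leq_ltn_trans lt_k; rewrite leq_mul2l; lia.
Qed.

Lemma leq_lastFar k k' : 0 < k' -> (k' <= lastFar k) = (binOf k' + s < binOf k).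
Proof.
move=> k'_gt0; have /andP[] := binOfP k'_gt0; rewrite /lastFar.
set c := binOf k; set c' := binOf k' => lo hi.
apply/idP/idP => h; first nia.
by apply: leq_trans hi _; rewrite leq_mul2l; lia.
Qed.

End Bins.

Section LegalDecompositions.

Variables (s b : nat) (a : nat -> nat).
Hypothesis b_gt0 : 0 < b.
Hypothesis a_incr : forall i, 0 < i -> a i < a i.+1.

Lemma inBin_term n k : 0 < k -> inBin b a n (a k) <-> binOf b k = n.
Proof.
move=> k_gt0; split=> [[k0 [k0_bin eq_a]] | <-]; last first.
  by exists k; split; last by []; apply: binOfP.
have k0_gt0 : 0 < k0 by case/andP: k0_bin => lo _; apply: leq_ltn_trans lo.
by rewrite -(term_inj a_incr k0_gt0 k_gt0 eq_a); apply: binOf_eq.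
Qed.

Lemma legalPair_term k k' : 0 < k -> 0 < k' ->
  legalPair s b a (a k) (a k') <->
  binOf b k' + s < binOf b k \/ binOf b k + s < binOf b k'.
Proof.
move=> k_gt0 k'_gt0; split=> [legal | far j []]; last first.
  move=> [n [_ [win /(inBin_term _ k_gt0) bin_n]]].
  move=> [n' [_ [win' /(inBin_term _ k'_gt0) bin_n']]]; lia.
case: (ltnP (binOf b k' + s) (binOf b k)) => [|near]; first by left.
case: (ltnP (binOf b k + s) (binOf b k')) => [|near']; first by right.
have inWin x : 0 < x ->
    inWindow s b a (maxn (binOf b k) (binOf b k')) (a x) <->
    binOf b x + s >= maxn (binOf b k) (binOf b k') /\
    binOf b x <= maxn (binOf b k) (binOf b k').
  move=> x_gt0; split=> [[n [_ [win /(inBin_term _ x_gt0) bin_n]]] | win]; first lia.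
  by exists (binOf b x); split=> //; split; [lia | apply/inBin_term].
case: (legal (maxn (binOf b k) (binOf b k'))).
by split; [apply/inWin | apply/inWin] => //; lia.
Qed.

Lemma legalDec_cons m k l : 0 < k ->
  legalDec s b a (termBefore a (lastFar s b k).+1) m l ->
  legalDec s b a (termBefore a k.+1) (a k + m) (a k :: l).
Proof.
move=> k_gt0 [sorted_l [before [<- chain]]].
have far := lastFar_lt s b_gt0 k_gt0.
split; last split; last split; last first.
- case: l sorted_l before chain => [|y t] //= _ before chain; split=> //.
  have [k' [/andP[k'_gt0 lt_k'] <-]] := before y (mem_head _ _).
  by apply/legalPair_term => //; left; rewrite -leq_lastFar.
- by [].
- move=> x; rewrite inE => /orP[/eqP-> | in_l]; first by exists k; split; lia.
  by have [k' [k'_lt <-]] := before x in_l; exists k'; split; lia.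
case: l sorted_l before {chain} => [|y t] //= sorted_t before.
rewrite sorted_t andbT.
by have [k' [/andP[k'_gt0 lt_k'] <-]] := before y (mem_head _ _); apply: (incr_term a_incr); lia.
Qed.

Hypothesis a_step : forall k, 0 < k -> a k + a (lastFar s b k).+1 <= a k.+1.

Lemma legalChain_sum_lt t k : 0 < k -> path (fun x y => y < x) (a k) t ->
  (forall x, x \in t -> isTerm a x) -> legalChain s b a (a k :: t) ->
  a k + sumn t < a k.+1.
Proof.
elim: t k => [|y t IHt] k k_gt0 /=; first by rewrite addn0 => *; apply: a_incr.
move=> /andP[lt_yk path_t] terms [legal chain].
have [k' [k'_gt0 eq_y]] := terms y (mem_head _ _); subst y.
have lt_k'k : k' < k by rewrite -(ltn_term a_incr).
have k'_far : k' <= lastFar s b k.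
  rewrite leq_lastFar //; case/legalPair_term: legal => // far.
  by have := leq_binOf b (ltnW lt_k'k); lia.
have terms' x : x \in t -> isTerm a x by move=> t_x; apply: terms; rewrite inE t_x orbT.
have := IHt k' k'_gt0 path_t terms' chain.
have := leq_term a_incr (ltn0Sn k') (ltn0Sn (lastFar s b k)); rewrite ltnS k'_far.
by have := a_step k_gt0; lia.
Qed.

Lemma legalDec_head m x t : legalDec s b a (isTerm a) m (x :: t) ->
  exists2 k, 0 < k & x = a k /\ a k <= m < a k.+1.
Proof.
move=> [path_t [terms [<- chain]]].
have [k [k_gt0 eq_x]] := terms _ (mem_head _ _); subst x.
exists k => //; split=> //.
have terms' y : y \in t -> isTerm a y by move=> t_y; apply: terms; rewrite inE t_y orbT.
by have := legalChain_sum_lt k_gt0 path_t terms' chain; rewrite /=; lia.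
Qed.

Hypothesis a_gt0 : forall i, 0 < i -> 0 < a i.

Lemma legalDec_unique m l1 l2 :
  legalDec s b a (isTerm a) m l1 -> legalDec s b a (isTerm a) m l2 -> l1 = l2.
Proof.
elim: l1 l2 m => [|x t IHt] [|y t2] m dec1 dec2 //.
- have [k k_gt0 [_ /andP[lo _]]] := legalDec_head dec2.
  by case: dec1 => [_ [_ [/= m0 _]]]; have := a_gt0 k_gt0; lia.
- have [k k_gt0 [_ /andP[lo _]]] := legalDec_head dec1.
  by case: dec2 => [_ [_ [/= m0 _]]]; have := a_gt0 k_gt0; lia.
have [k k_gt0 [eq_x /andP[lo hi]]] := legalDec_head dec1.
have [k' k'_gt0 [eq_y /andP[lo' hi']]] := legalDec_head dec2.
have eq_kk' : k = k'.
  case: (ltngtP k k') => // [lt_kk' | lt_k'k].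
    by have := leq_term a_incr (ltn0Sn k) k'_gt0; rewrite lt_kk'; lia.
  by have := leq_term a_incr (ltn0Sn k') k_gt0; rewrite lt_k'k; lia.
subst x y k'; congr (_ :: _).
by apply: IHt (m - a k) _ _; apply: legalDec_behead; [apply: dec1 | apply: dec2].
Qed.

Lemma no_legalDec_term i : 0 < i -> ~ hasLegalDecBefore s b a i (a i).
Proof.
move=> i_gt0 [[|x t] [path_t [before [sum_xt chain]]]].
  by have := a_gt0 i_gt0; rewrite -sum_xt.
have [k [/andP[k_gt0 lt_ki] eq_x]] := before x (mem_head _ _); subst x.
have terms y : y \in t -> isTerm a y.
  by move=> t_y; apply: termBefore_isTerm (before y _); rewrite inE t_y orbT.
have := legalChain_sum_lt k_gt0 path_t terms chain.
by have := leq_term a_incr (ltn0Sn k) i_gt0; rewrite lt_ki -sum_xt /=; lia.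
Qed.

End LegalDecompositions.

Section GeneracciSequence.

Variables (s b : nat).
Hypothesis b_gt0 : 0 < b.

Lemma isGeneracci_incr a : isGeneracci s b a -> forall i, 0 < i -> a i < a i.+1.
Proof. by case=> _ []. Qed.

(* Otherwise a_(k+1) - a_k < a_(lastFar k + 1) would be decomposable with
   a_1, ..., a_(lastFar k), and prepending a_k would decompose a_(k+1). *)
Lemma isGeneracci_step a : isGeneracci s b a ->
  forall k, 0 < k -> a k + a (lastFar s b k).+1 <= a k.+1.
Proof.
move=> gen k k_gt0; have a_incr := isGeneracci_incr gen.
have lt_k := a_incr k k_gt0.
case: gen => _ [_ minimal]; rewrite leqNgt; apply/negP => lt_next.
have [l dec] : hasLegalDecBefore s b a (lastFar s b k).+1 (a k.+1 - a k).
  by apply: (minimal _ (ltn0Sn _)).2; lia.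
apply: (minimal k.+1 (ltn0Sn _)).1; exists (a k :: l).
by rewrite -[a k.+1](subnKC (ltnW lt_k)); apply: legalDec_cons dec.
Qed.

Lemma legalDec_prefix a a' i m l :
  (forall k, 0 < k -> a k < a k.+1) -> (forall k, 0 < k -> a' k < a' k.+1) ->
  (forall k, 0 < k < i -> a k = a' k) ->
  legalDec s b a (termBefore a i) m l -> legalDec s b a' (termBefore a' i) m l.
Proof.
move=> a_incr a'_incr agree [sorted_l [before [sum_l chain]]].
split=> //; split; first by move=> x /before [k [k_lt <-]]; exists k; rewrite agree.
split=> //; elim: l before {sorted_l sum_l} chain => [|x [|y t] IHl] //= before.
move=> [legal chain]; split; last first.
  by apply: IHl => // z t_z; apply: before; rewrite inE t_z orbT.
have [k [k_lt eq_x]] := before x (mem_head _ _).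
have [k' [k'_lt eq_y]] : termBefore a i y by apply: before; rewrite !inE eqxx orbT.
subst x y; rewrite !agree //; case/andP: k_lt => k_gt0 _; case/andP: k'_lt => k'_gt0 _.
apply/(legalPair_term s b_gt0 a'_incr k_gt0 k'_gt0).
exact/(legalPair_term s b_gt0 a_incr k_gt0 k'_gt0).
Qed.

(* By strong induction on i: the smaller of a_i, a'_i is decomposable before
   i in one sequence, hence in the other since they agree below i. *)
Lemma isGeneracci_unique a a' : isGeneracci s b a -> isGeneracci s b a' ->
  forall i, 0 < i -> a' i = a i.
Proof.
move=> gen gen'; have a_incr := isGeneracci_incr gen.
have a'_incr := isGeneracci_incr gen'.
case: gen => a_gt0 [_ minimal]; case: gen' => a'_gt0 [_ minimal'].
elim/ltn_ind => i IHi i_gt0.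
have agree k : 0 < k < i -> a k = a' k by move=> /andP[k_gt0 lt_ki]; rewrite IHi.
have agree' k : 0 < k < i -> a' k = a k by move=> /agree.
case: (ltngtP (a i) (a' i)) => // lt_a; exfalso.
- have [l dec] := (minimal' i i_gt0).2 (a i) (ltac:(have := a_gt0 i i_gt0; lia)).
  by apply: (minimal i i_gt0).1; exists l; apply: legalDec_prefix dec.
- have [l dec] := (minimal i i_gt0).2 (a' i) (ltac:(have := a'_gt0 i i_gt0; lia)).
  by apply: (minimal' i i_gt0).1; exists l; apply: legalDec_prefix dec.
Qed.

(* Both recursive calls are at indices below k, so fuel f >= k suffices. *)
Fixpoint generacciFuel (f k : nat) : nat :=
  if f is f'.+1 then
    if k <= 1 then 1
    else generacciFuel f' k.-1 + generacciFuel f' (lastFar s b k.-1).+1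
  else 1.

Definition generacci (k : nat) : nat := generacciFuel k k.

Lemma generacciFuel_gt0 f k : 0 < generacciFuel f k.
Proof. by elim: f k => [|f IHf] k //=; case: ifP => // _; rewrite addn_gt0 IHf. Qed.

Lemma generacciFuel_enough f f' k : k <= f -> k <= f' ->
  generacciFuel f k = generacciFuel f' k.
Proof.
elim: f f' k => [|f IHf] [|f'] k le_kf le_kf' //; try by case: k le_kf le_kf'.
rewrite /=; case: leqP => // k_gt1.
have far : lastFar s b k.-1 < k.-1 by apply: lastFar_lt; lia.
by rewrite (IHf f' k.-1) ?(IHf f' (lastFar s b k.-1).+1) //; lia.
Qed.

Lemma generacciS k : 0 < k ->
  generacci k.+1 = generacci k + generacci (lastFar s b k).+1.
Proof.
move=> k_gt0; rewrite [generacci k.+1]/generacci /= ifN; last by rewrite -ltnNge.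
have far := lastFar_lt s b_gt0 k_gt0.
by congr (_ + _); apply: generacciFuel_enough.
Qed.

Lemma generacci_incr i : 0 < i -> generacci i < generacci i.+1.
Proof. by move=> i_gt0; rewrite generacciS // -addn1 leq_add2l generacciFuel_gt0. Qed.

Lemma generacci_step k : 0 < k ->
  generacci k + generacci (lastFar s b k).+1 <= generacci k.+1.
Proof. by move=> k_gt0; rewrite (generacciS k_gt0). Qed.

(* Greedy: subtract a_(k+1) from m when possible; the remainder is below
   a_(lastFar (k+1) + 1), so it decomposes with indices up to lastFar (k+1). *)
Lemma generacci_legalDec i m : 0 < m < generacci i.+1 ->
  hasLegalDecBefore s b generacci i.+1 m.
Proof.
elim/ltn_ind: i m => -[|k] IHk m /andP[m_gt0]; first by rewrite /generacci /=; lia.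
rewrite generacciS // => lt_m.
case: (ltnP m (generacci k.+1)) => [lt_mk | ge_mk].
  have [l dec] := IHk k (ltnSn k) m ltac:(lia).
  by exists l; apply: sub_legalDec dec => x; apply: termBefore_widen.
have far := lastFar_lt s b_gt0 (ltn0Sn k).
have [l dec] : hasLegalDecBefore s b generacci (lastFar s b k.+1).+1 (m - generacci k.+1).
  case: (posnP (m - generacci k.+1)) => [-> | gap_gt0]; first by exists [::].
  by apply: IHk; lia.
exists (generacci k.+1 :: l); rewrite -[m](subnKC ge_mk).
exact: (legalDec_cons b_gt0 generacci_incr (ltn0Sn k) dec).
Qed.

Lemma generacci_isGeneracci : isGeneracci s b generacci.
Proof.
have gen_gt0 i : 0 < i -> 0 < generacci i by move=> _; apply: generacciFuel_gt0.
split=> //; split=> [|i i_gt0]; first exact: generacci_incr.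
split; first exact: no_legalDec_term generacci_incr generacci_step gen_gt0 _ i_gt0.
move=> m m_lt; rewrite -(prednK i_gt0); apply: generacci_legalDec.
by rewrite prednK.
Qed.

End GeneracciSequence.

Unset Implicit Arguments.

Theorem mainTheorem3 (s b : nat) (hs : 1 <= s) (hb : 1 <= b) :
  (exists a : nat -> nat, isGeneracci s b a /\
     forall a' : nat -> nat, isGeneracci s b a' ->
       forall i, 1 <= i -> a' i = a i) /\
  (forall a : nat -> nat, isGeneracci s b a ->
     forall m, 0 < m -> exists! l : seq nat, legalDec s b a (isTerm a) m l).
Proof.
split.
  exists (generacci s b); split; first exact: generacci_isGeneracci.
  by move=> a' gen'; apply: isGeneracci_unique (generacci_isGeneracci s hb) gen'.
move=> a gen m m_gt0.
have a_incr := isGeneracci_incr gen; have a_step := isGeneracci_step hb gen.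
have a_gt0 : forall i, 0 < i -> 0 < a i by case: gen.
have [l dec] : hasLegalDecBefore s b a m.+1 m.
  case: gen => _ [_ minimal]; apply: (minimal _ (ltn0Sn m)).2.
  by have := index_leq_term a_incr a_gt0 (ltn0Sn m); lia.
have decT := sub_legalDec (@termBefore_isTerm a m.+1) dec.
by exists l; split=> // l' dec'; apply: (legalDec_unique hb a_incr a_step a_gt0 decT dec').
Qed.
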